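(* Let $H$ be a Hilbert space with norm $\|\cdot\|$, $A$ a positive definite selfadjoint operator on $H$, $\beta\in(0,1)$, $0=t_0<t_1<\dots<t_N=T$ a partition with $\kappa_0=t_1-t_0$, $U_0\in D(A)$, and $f:[0,T]\to H$. Let $\hat G$ be the continuous piecewise linear function (linear on each $[t_j,t_{j+1}]$) with $\hat G(0)=AU_0-f(0)$ and $\hat G(t_j)=0$ for $j=1,\dots,N$. Then there is a constant $C>0$ depending on $\beta$ such that for $t\in(\kappa_0,T]$ \[ \int_0^t (g_{\beta,t}(\tau))^{-1}\|\hat G(\tau)\|^2\,d\tau\leq C\|AU_0-f(0)\|^2\kappa_0^{1+\beta}, \] and \[ \int_0^t (t-\tau)^{\beta-1}\|\hat G(\tau)\|\,d\tau\leq\frac1\beta\|AU_0-f(0)\|\left(t^\beta-(t-\kappa_0)^\beta\right)\leq C\kappa_0\|AU_0-f(0)\|(t-\kappa_0)^{\beta-1}, \] where $g_{\beta,t}(\tau)=\frac{1}{\Gamma(1-\beta)}\left((t-\tau)^{-\beta}+\tau^{-\beta}\right)$. *)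

From HB Require Import structures.
From mathcomp Require Import all_boot all_order all_algebra.
From mathcomp Require Import all_classical all_reals all_analysis.
Set Implicit Arguments. Unset Strict Implicit. Unset Printing Implicit Defensive.
Import Order.TTheory GRing.Theory Num.Theory.
Import numFieldNormedType.Exports.
Local Open Scope classical_set_scope.
Local Open Scope ring_scope.

Definition Gamma_fun (R : realType) (s : R) : R :=
  Rintegral (@lebesgue_measure R) `]0%R, +oo[%classic
    (fun x : R => x `^ (s - 1) * expR (- x)).

Definition g_bt (R : realType) (beta t tau : R) : R :=
  (Gamma_fun (1 - beta))^-1 * ((t - tau) `^ (- beta) + tau `^ (- beta)).

Definition is_inner_product (R : realType) (H : completeNormedModType R)
    (inner : H -> H -> R) : Prop :=
  [/\ (forall x y, inner x y = inner y x),
      (forall a x y z, inner (a *: x + y) z = a * inner x z + inner y z) &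
      (forall x, inner x x = `|x| ^+ 2)].

Definition linear_op_on (R : realType) (H : completeNormedModType R)
    (D : set H) (A : H -> H) : Prop :=
  [/\ D 0,
      (forall a x y, D x -> D y -> D (a *: x + y)) &
      (forall a x y, D x -> D y -> A (a *: x + y) = a *: A x + A y)].

(* (A, D(A)) is a densely defined selfadjoint operator: A equals its adjoint, i.e. symmetric on D(A) and D(adjoint) is contained in D(A). *)

Definition selfadjoint (R : realType) (H : completeNormedModType R)
    (inner : H -> H -> R) (D : set H) (A : H -> H) : Prop :=
  [/\ linear_op_on D A,
      closure D = setT,
      (forall x y, D x -> D y -> inner (A x) y = inner x (A y)) &
      (forall y z, (forall x, D x -> inner (A x) y = inner x z) -> D y)].

Definition pos_def (R : realType) (H : completeNormedModType R)
    (inner : H -> H -> R) (D : set H) (A : H -> H) : Prop :=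
  exists2 c : R, 0 < c & forall x, D x -> c * `|x| ^+ 2 <= inner (A x) x.

Definition time_partition (R : realType) (N : nat) (t : nat -> R) (T : R) : Prop :=
  [/\ (0 < N)%N, t 0%N = 0, (forall j, (j < N)%N -> t j < t j.+1) & t N = T].

Definition piecewise_linear (R : realType) (H : normedModType R)
    (N : nat) (t : nat -> R) (G : R -> H) : Prop :=
  forall j, (j < N)%N -> forall tau, t j <= tau <= t j.+1 ->
    G tau = ((t j.+1 - tau) / (t j.+1 - t j)) *: G (t j)
            + ((tau - t j) / (t j.+1 - t j)) *: G (t j.+1).

(* On [0, t_1] the function G is the hat (1 - tau / t_1) G(0), and it vanishes
   on [t_1, T]; so both integrands are supported in ]0, t_1], where
   |G| <= |G(0)|.  There 1 / g_{beta,t}(tau) <= Gamma(1 - beta) tau^beta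
   <= Gamma(1 - beta) t_1^beta, which gives the first bound.  The second one is
   int_0^{t_1} (t - tau)^(beta - 1) dtau = (t^beta - (t - t_1)^beta) / beta, and
   this is at most t_1 (t - t_1)^(beta - 1) because the integrand increases in
   tau.  Hence C = Gamma(1 - beta) + 1 works; only Gamma(1 - beta) >= 0 is
   used. *)

From HB Require Import structures.
From mathcomp Require Import all_boot all_order all_algebra.
From mathcomp Require Import all_classical all_reals all_analysis.
From mathcomp Require Import ring lra measurable_realfun.
Import Order.TTheory GRing.Theory Num.Theory.
Import numFieldNormedType.Exports.
Local Open Scope classical_set_scope.
Local Open Scope ring_scope.

Section subr_powR.
Context {R : realType}.
Local Notation mu := (@lebesgue_measure R).

Lemma le0_ger_powR (a x y : R) : a <= 0 -> 0 < x -> x <= y ->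
  y `^ a <= x `^ a.
Proof.
move=> a_le0 x_gt0 xy; have y_gt0 := lt_le_trans x_gt0 xy.
have -> : a = - (- a) by rewrite opprK.
rewrite (powRN y) (powRN x) lef_pV2 ?posrE ?powR_gt0 //.
by apply: ge0_ler_powR; rewrite ?oppr_ge0 // nnegrE ltW.
Qed.

Lemma measurable_subr_powR (D : set R) (s a : R) :
  measurable_fun D (fun x => (s - x) `^ a).
Proof.
apply: measurableT_comp (measurable_powR a) _.
by apply: measurable_funB; [exact: measurable_cst | exact: measurable_id].
Qed.

Lemma is_derive_subr_powR (a s x : R) : x < s ->
  is_derive x 1 (fun y => (s - y) `^ a) (- (a * (s - x) `^ (a - 1))).
Proof.
move=> xs; have sx_gt0 : 0 < s - x by rewrite subr_gt0.
have dsub : is_derive x 1 (fun y : R => s - y) (-1).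
  by rewrite -[-1]sub0r; apply: is_deriveB.
have := @is_derive1_comp R (fun z => z `^ a) (fun y => s - y) x _ _
  (is_derive1_powR a sx_gt0) dsub.
by rewrite mulrN1.
Qed.

Lemma integral_subr_powR (b s k : R) : 0 < b -> 0 < k -> k < s ->
  (\int[mu]_(x in `[0%R, k]) ((s - x) `^ (b - 1))%:E
    = (b^-1 * (s `^ b - (s - k) `^ b))%:E)%E.
Proof.
move=> b_gt0 k_gt0 ks.
pose F x := - b^-1 * (s - x) `^ b.
have dF x : x < s -> is_derive x 1 F ((s - x) `^ (b - 1)).
  move=> xs; apply: is_derive_eq; first exact/is_deriveZ/is_derive_subr_powR.
  by rewrite /GRing.scale /= mulrN mulNr opprK mulrA mulVf ?gt_eqF // mul1r.
have cF x : x < s -> {for x, continuous F}.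
  move=> xs; apply: differentiable_continuous; apply/derivable1_diffP.
  by have [] := dF x xs.
rewrite (@continuous_FTC2 _ _ F) //.
- by rewrite /F -EFinB !subr0; congr (_%:E); ring.
- apply: continuous_in_subspaceT => x; rewrite inE /= in_itv /= => /andP[_ xk].
  apply: differentiable_continuous; apply/derivable1_diffP.
  by have [] := @is_derive_subr_powR (b - 1) s x (le_lt_trans xk ks).
- split.
  + move=> x; rewrite in_itv /= => /andP[_ xk].
    by have [] := dF x (lt_trans xk ks).
  + by apply/cvg_at_right_filter/cF; lra.
  + by apply/cvg_at_left_filter/cF; lra.
- move=> x; rewrite in_itv /= => /andP[_ xk].
  by rewrite derive1E; have [_ ->] := dF x (lt_trans xk ks).
Qed.

Lemma powR_increment_le (b s k : R) : 0 < b <= 1 -> 0 < k -> k < s ->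
  b^-1 * (s `^ b - (s - k) `^ b) <= k * (s - k) `^ (b - 1).
Proof.
move=> /andP[b_gt0 b_le1] k_gt0 ks.
rewrite -lee_fin -integral_subr_powR //.
have -> : ((k * (s - k) `^ (b - 1))%:E
    = \int[mu]_(x in `[0%R, k]) (cst ((s - k) `^ (b - 1))%:E x))%E.
  rewrite integral_cst //= lebesgue_measure_itv /= lte_fin k_gt0.
  by rewrite -EFinD -EFinM subr0 mulrC.
apply: ge0_le_integral => //.
- by move=> x _; rewrite lee_fin powR_ge0.
- by apply/measurable_EFinP; exact: measurable_subr_powR.
- move=> x; rewrite /= in_itv /= => /andP[x_ge0 xk]; rewrite lee_fin.
  apply: le0_ger_powR; lra.
Qed.

End subr_powR.

Section bounded_support_integral.
Context {R : realType}.
Local Notation mu := (@lebesgue_measure R).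

Lemma integral_vanishing_tail (k s : R) (f : R -> R) : 0 < k -> k < s ->
  (forall x, 0 < x < s -> 0 <= f x) -> measurable_fun `]0%R, k] f ->
  (forall x, k < x < s -> f x = 0) ->
  (\int[mu]_(x in `]0%R, s[) (f x)%:E = \int[mu]_(x in `]0%R, k]) (f x)%:E)%E.
Proof.
move=> k_gt0 ks f_ge0 mf f0.
have split_itv : `]0%R, s[%classic = `]0%R, k]%classic `|` `]k, s[%classic.
  by apply: itv_bndbnd_setU; rewrite bnd_simp ?ltW.
have tail0 : {in `]k, s[%classic, cst 0 =1 f}.
  by move=> x; rewrite inE /= in_itv /= => /f0 ->.
have mf_tail : measurable_fun `]k, s[ f.
  by apply: eq_measurable_fun tail0 _; exact: measurable_cst.
rewrite split_itv ge0_integral_setU //.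
- rewrite [X in (_ + X)%E](_ : _ = 0%E) ?adde0 //.
  by rewrite -(integral0 mu `]k, s[%classic); apply: eq_integral => x /tail0 <-.
- exact/measurable_EFinP/measurable_funU.
- by move=> x [] /=; rewrite in_itv /= lee_fin => /andP[? ?]; apply: f_ge0; lra.
- by apply/eqP; apply/seteqP; split => x //= [] /=; rewrite !in_itv /=; lra.
Qed.

Lemma integral_weighted_bounded_le (k s c : R) (w h : R -> R) :
  0 < k -> k < s -> (forall x, 0 < x < s -> 0 <= w x) ->
  (forall x, 0 < x <= k -> 0 <= h x <= c) ->
  (forall x, k < x < s -> h x = 0) ->
  measurable_fun `]0%R, k] w -> measurable_fun `]0%R, k] h ->
  (\int[mu]_(x in `]0%R, s[) (w x * h x)%:E
    <= c%:E * \int[mu]_(x in `]0%R, k]) (w x)%:E)%E.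
Proof.
move=> k_gt0 ks w_ge0 h_bnd h0 mw mh.
have w_ge0' x : 0 < x <= k -> 0 <= w x by move=> /andP[? ?]; apply: w_ge0; lra.
have c_ge0 : 0 <= c.
  have /andP[hk_ge0 hkc] : 0 <= h k <= c by apply: h_bnd; rewrite k_gt0 lexx.
  exact: le_trans hk_ge0 hkc.
rewrite (@integral_vanishing_tail k) //; last 3 first.
- move=> x /[dup] x0s /andP[x_gt0 xs]; apply: mulr_ge0; first exact: w_ge0.
  have [xk|kx] := leP x k; last by rewrite h0 // kx.
  by have /andP[] : 0 <= h x <= c by apply: h_bnd; rewrite x_gt0 xk.
- exact: measurable_funM.
- by move=> x /h0 ->; rewrite mulr0.
rewrite -ge0_integralZl_EFin //; last exact/measurable_EFinP.
apply: ge0_le_integral => //.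
- move=> x; rewrite /= in_itv /= => xk.
  by have /andP[? _] := h_bnd x xk; rewrite lee_fin mulr_ge0 ?w_ge0'.
- exact/measurable_EFinP/measurable_funM.
- by apply/measurable_EFinP/measurable_funM => //; exact: measurable_cst.
- move=> x; rewrite /= in_itv /= => xk.
  have /andP[_ hc] := h_bnd x xk.
  by rewrite -EFinM lee_fin mulrC ler_wpM2r ?w_ge0'.
Qed.

End bounded_support_integral.

Section g_bt.
Context {R : realType}.
Local Notation mu := (@lebesgue_measure R).

Lemma Gamma_fun_ge0 (s : R) : 0 <= Gamma_fun s.
Proof.
by apply: Rintegral_ge0 => x _; rewrite mulr_ge0 ?powR_ge0 ?expR_ge0.
Qed.

Lemma g_bt_ge0 (beta t tau : R) : 0 <= g_bt beta t tau.
Proof. by rewrite mulr_ge0 ?invr_ge0 ?Gamma_fun_ge0 ?addr_ge0 ?powR_ge0. Qed.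

Lemma measurable_g_bt_inv (D : set R) (beta t : R) :
  measurable_fun D (fun tau => (g_bt beta t tau)^-1).
Proof.
apply: eq_measurable_fun (fun tau _ => powR_inv1 (g_bt_ge0 beta t tau)) _.
apply: measurableT_comp (measurable_powR _) _.
apply: measurable_funM; first exact: measurable_cst.
apply: measurable_funD; first exact: measurable_subr_powR.
by apply: measurableT_comp (measurable_powR _) _; exact: measurable_id.
Qed.

Lemma g_bt_inv_le (beta t tau : R) : 0 < tau ->
  (g_bt beta t tau)^-1 <= Gamma_fun (1 - beta) * tau `^ beta.
Proof.
move=> tau_gt0; rewrite /g_bt invfM invrK ler_wpM2l ?Gamma_fun_ge0 //.
have taub_gt0 : 0 < tau `^ (- beta) by exact: powR_gt0.
rewrite -[tau `^ beta]invrK -powRN lef_pV2 ?posrE ?lerDr ?powR_ge0 //.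
by rewrite ltr_wpDl ?powR_ge0.
Qed.

Lemma integral_g_bt_inv_le (beta s k : R) : 0 <= beta -> 0 < k ->
  (\int[mu]_(x in `]0%R, k]) ((g_bt beta s x)^-1)%:E
    <= (Gamma_fun (1 - beta) * k `^ (1 + beta))%:E)%E.
Proof.
move=> b_ge0 k_gt0.
apply: (@le_trans _ _ (\int[mu]_(x in `]0%R, k])
    (cst (Gamma_fun (1 - beta) * k `^ beta)%:E x))%E).
  apply: ge0_le_integral => //.
  - by move=> x _; rewrite lee_fin invr_ge0 g_bt_ge0.
  - by apply/measurable_EFinP; exact: measurable_g_bt_inv.
  - move=> x; rewrite /= in_itv /= => /andP[x_gt0 xk]; rewrite lee_fin.
    apply: le_trans (g_bt_inv_le beta s x x_gt0) _.
    rewrite ler_wpM2l ?Gamma_fun_ge0 //.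
    by apply: ge0_ler_powR; rewrite // nnegrE ltW // (lt_le_trans x_gt0).
rewrite integral_cst //= lebesgue_measure_itv /= lte_fin k_gt0 -EFinD -EFinM.
rewrite lee_fin subr0 powRD; last by rewrite (gt_eqF k_gt0) implybT.
by rewrite powRr1 ?(ltW k_gt0) // (mulrC k) mulrA.
Qed.

End g_bt.

Section hat_function.
Context {R : realType} {V : normedModType R}.
Context {N : nat} {t : nat -> R} {T : R} {G : R -> V}.
Hypotheses (tP : time_partition N t T) (GP : piecewise_linear N t G).
Hypothesis G_knots : forall j, (1 <= j <= N)%N -> G (t j) = 0.
Local Notation mu := (@lebesgue_measure R).

Lemma first_node_gt0 : 0 < t 1%N.
Proof. by case: tP => N_gt0 t0 t_incr _; rewrite -t0 t_incr. Qed.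

Lemma hat_first_piece x : 0 <= x <= t 1%N ->
  G x = ((t 1%N - x) / t 1%N) *: G 0.
Proof.
have [N_gt0 t0 _ _] := tP; rewrite -t0 => x01.
by rewrite (GP 0 N_gt0 x x01) (G_knots 1) ?N_gt0 // scaler0 addr0 t0 subr0.
Qed.

Lemma hat_vanishes x : t 1%N <= x <= T -> G x = 0.
Proof.
have [N_gt0 _ _ tN] := tP.
suff G0_upto j : (1 <= j <= N)%N -> forall y, t 1%N <= y <= t j -> G y = 0.
  by rewrite -tN; apply: G0_upto; rewrite N_gt0 leqnn.
elim: j => [//|[|j] IH] /andP[_ jN] y /andP[t1y ytj].
  have -> : y = t 1%N by apply/eqP; rewrite eq_le ytj t1y.
  by apply: G_knots; rewrite jN.
have [ytj1|tj1y] := leP y (t j.+1).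
  by apply: IH; rewrite ?t1y ?ytj1 //= (ltnW jN).
rewrite (GP j.+1 jN y); last by rewrite ytj (ltW tj1y).
by rewrite !G_knots ?scaler0 ?addr0 //= (ltnW jN).
Qed.

Lemma hat_norm_first_piece x : 0 <= x <= t 1%N ->
  `|G x| = (t 1%N - x) / t 1%N * `|G 0|.
Proof.
move=> /[dup] /andP[_ xt1] x0t1.
rewrite hat_first_piece // normrZ ger0_norm //.
by rewrite divr_ge0 ?subr_ge0 // ltW // first_node_gt0.
Qed.

Lemma hat_norm_bounded x : 0 < x <= t 1%N -> 0 <= `|G x| <= `|G 0|.
Proof.
have t1_gt0 := first_node_gt0.
move=> /andP[x_gt0 xt1]; rewrite normr_ge0 hat_norm_first_piece ?(ltW x_gt0) //.
rewrite ler_piMl // ler_pdivrMr // mul1r; lra.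
Qed.

Lemma hat_norm_tail s : s <= T -> forall x, t 1%N < x < s -> `|G x| = 0.
Proof.
move=> sT x /andP[t1x xs].
by rewrite hat_vanishes ?normr0 // (ltW t1x) (ltW (lt_le_trans xs sT)).
Qed.

Lemma measurable_hat_norm : measurable_fun `]0%R, t 1%N] (fun x => `|G x|).
Proof.
have hat_norm : {in `]0%R, t 1%N]%classic,
    (fun x => (t 1%N - x) / t 1%N * `|G 0|) =1 (fun x => `|G x|)}.
  move=> x; rewrite inE /= in_itv /= => /andP[x_gt0 xt1].
  by rewrite [`|G x|]hat_norm_first_piece // (ltW x_gt0).
apply: eq_measurable_fun hat_norm _.
apply: measurable_funM; last exact: measurable_cst.
apply: measurable_funM; last exact: measurable_cst.
by apply: measurable_funB; [exact: measurable_cst | exact: measurable_id].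
Qed.

Lemma integral_g_bt_inv_hat_le (beta s : R) : 0 <= beta -> t 1%N < s <= T ->
  (\int[mu]_(x in `]0%R, s[) ((g_bt beta s x)^-1 * `|G x| ^+ 2)%:E
    <= (`|G 0| ^+ 2 * (Gamma_fun (1 - beta) * t 1%N `^ (1 + beta)))%:E)%E.
Proof.
move=> b_ge0 /andP[t1s sT]; rewrite EFinM.
apply: (@le_trans _ _ ((`|G 0| ^+ 2)%:E
    * \int[mu]_(x in `]0%R, t 1%N]) ((g_bt beta s x)^-1)%:E)%E); last first.
  apply: lee_wpmul2l; first by rewrite lee_fin sqr_ge0.
  exact: integral_g_bt_inv_le b_ge0 first_node_gt0.
apply: integral_weighted_bounded_le first_node_gt0 t1s _ _ _ _ _.
- by move=> x _; rewrite invr_ge0 g_bt_ge0.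
- move=> x /hat_norm_bounded /andP[G_ge0 G_le].
  by rewrite sqr_ge0 lerXn2r ?nnegrE.
- by move=> x /(hat_norm_tail s sT) ->; rewrite expr0n.
- exact: measurable_g_bt_inv.
- by apply: measurable_funX; exact: measurable_hat_norm.
Qed.

Lemma integral_subr_powR_hat_le (beta s : R) : 0 < beta -> t 1%N < s <= T ->
  (\int[mu]_(x in `]0%R, s[) ((s - x) `^ (beta - 1) * `|G x|)%:E
    <= (`|G 0| * (beta^-1 * (s `^ beta - (s - t 1%N) `^ beta)))%:E)%E.
Proof.
move=> b_gt0 /andP[t1s sT].
rewrite EFinM -integral_subr_powR ?first_node_gt0 //.
rewrite -integral_itv_obnd_cbnd; last first.
  by apply/measurable_EFinP; exact: measurable_subr_powR.
apply: integral_weighted_bounded_le first_node_gt0 t1s _ _ _ _ _.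
- by move=> x _; rewrite powR_ge0.
- exact: hat_norm_bounded.
- exact: hat_norm_tail s sT.
- exact: measurable_subr_powR.
- exact: measurable_hat_norm.
Qed.

End hat_function.

Theorem lemma5p3 (R : realType) (beta : R) :
  0 < beta < 1 ->
  exists2 C : R, 0 < C &
  forall (H : completeNormedModType R) (inner : H -> H -> R)
         (D : set H) (A : H -> H) (N : nat) (t : nat -> R) (T : R)
         (U0 : H) (f : R -> H) (G : R -> H),
    is_inner_product inner ->
    selfadjoint inner D A -> pos_def inner D A ->
    time_partition N t T -> D U0 ->
    piecewise_linear N t G ->
    G 0 = A U0 - f 0 ->
    (forall j, (1 <= j <= N)%N -> G (t j) = 0) ->
    let kappa0 := t 1%N - t 0%N in
    forall s : R, kappa0 < s <= T ->
      [/\ (\int[@lebesgue_measure R]_(tau in `]0%R, s[)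
              ((g_bt beta s tau)^-1 * `|G tau| ^+ 2)%:E
            <= (C * `|A U0 - f 0| ^+ 2 * kappa0 `^ (1 + beta))%:E)%E,
          (\int[@lebesgue_measure R]_(tau in `]0%R, s[)
              ((s - tau) `^ (beta - 1) * `|G tau|)%:E
            <= (beta^-1 * `|A U0 - f 0| * (s `^ beta - (s - kappa0) `^ beta))%:E)%E &
          beta^-1 * `|A U0 - f 0| * (s `^ beta - (s - kappa0) `^ beta)
            <= C * kappa0 * `|A U0 - f 0| * (s - kappa0) `^ (beta - 1)].
Proof.
move=> /andP[b_gt0 b_lt1]; set Gam := Gamma_fun (1 - beta).
have Gam_ge0 : 0 <= Gam := Gamma_fun_ge0 _.
exists (Gam + 1); first lra.
move=> H inner D A N t T U0 f G _ _ _ tP _ GP <- G_knots kappa0 s sP.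
have [_ t0 _ _] := tP; rewrite /kappa0 t0 subr0 in sP *.
have k_gt0 := first_node_gt0 tP; have /andP[ks _] := sP.
set k := t 1%N in k_gt0 ks sP *; set c := `|G 0|.
have c_ge0 : 0 <= c := normr_ge0 _.
split.
- have := integral_g_bt_inv_hat_le tP GP G_knots beta s (ltW b_gt0) sP.
  move/le_trans; apply.
  rewrite lee_fin mulrCA mulrA ler_wpM2r ?powR_ge0 //.
  by rewrite ler_wpM2r ?sqr_ge0 // lerDl.
- rewrite [beta^-1 * c]mulrC -mulrA.
  exact: integral_subr_powR_hat_le tP GP G_knots beta s b_gt0 sP.
- have b_le1 : 0 < beta <= 1 by rewrite b_gt0 ltW.
  rewrite mulrAC [X in _ <= X]mulrAC ler_wpM2r //.
  apply: le_trans (powR_increment_le beta s k b_le1 k_gt0 ks) _.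
  by rewrite -mulrA ler_peMl ?mulr_ge0 ?powR_ge0 ?(ltW k_gt0) // lerDr.
Qed.
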